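(* $R(\{C_4,P_5\},\{C_4,P_5\}) = 5$; that is, $5$ is the least integer $N$ such that for every $n \geq N$, every red/blue coloring of the edges of $K_n$ contains a red $C_4$ or red $P_5$, or a blue $C_4$ or blue $P_5$.
   Context: $C_4$ is the cycle on $4$ vertices and $P_5$ is the path on $5$ vertices. For sets of graphs $\mathscr{G}$ and $\mathscr{H}$, $R(\mathscr{G},\mathscr{H})$ is the minimum integer $N$ such that any $2$-coloring (red and blue) of the edges of $K_n$ with $n \geq N$ contains either a red copy of some graph in $\mathscr{G}$ or a blue copy of some graph in $\mathscr{H}$. *)

From Stdlib Require Import List.
From mathcomp Require Import all_boot.
Set Implicit Arguments. Unset Strict Implicit. Unset Printing Implicit Defensive.

Definition graph (k : nat) := 'I_k -> 'I_k -> bool.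

Definition C4 : graph 4 := fun i j =>
  ((i : nat) == (j + 1) %% 4) || ((j : nat) == (i + 1) %% 4).

Definition P5 : graph 5 := fun i j =>
  ((i : nat) == j + 1) || ((j : nat) == i + 1).

(* A 2-colouring of the edges of K_n: a symmetric map on pairs of distinct
   vertices; true = red, false = blue.  Values on the diagonal are irrelevant. *)
Definition coloring (n : nat) := 'I_n -> 'I_n -> bool.
Definition symmetric_coloring n (c : coloring n) := forall x y, c x y = c y x.

Definition has_mono_copy n (c : coloring n) (col : bool) k (H : graph k) :=
  exists f : 'I_k -> 'I_n, injective f /\
    forall i j, H i j -> c (f i) (f j) = col.

Definition family := seq {k : nat & graph k}.

Definition arrows n (c : coloring n) (G H : family) :=
  (exists2 g, In g G & has_mono_copy c true (projT2 g)) \/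
  (exists2 h, In h H & has_mono_copy c false (projT2 h)).

Definition ramsey_good (G H : family) (N : nat) :=
  forall n, N <= n -> forall c : coloring n, symmetric_coloring c -> arrows c G H.

Definition is_ramsey_number (G H : family) (N : nat) :=
  ramsey_good G H N /\ forall M, ramsey_good G H M -> N <= M.

Definition C4P5 : family := [:: existT graph 4 C4; existT graph 5 P5].

(* Upper bound: a colouring of K_n with n >= 5 restricts to K_5, where it is
   determined by the colours of the ten edges; each of the 2^10 colourings of
   K_5 contains a monochromatic C_4 or P_5, as verified by a decision
   procedure for monochromatic copies (a search over vertex orderings) that is
   proved sound and complete.  Lower bound: colour K_4 red along the path
   0-1-2-3; the blue edges then form the path 2-0-3-1, so neither colour
   contains a cycle, and P_5 does not fit in K_4. *)

From mathcomp Require Import all_boot.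
From Stdlib Require List.
Set Implicit Arguments. Unset Strict Implicit. Unset Printing Implicit Defensive.

Lemma hasInP T (p : pred T) (s : seq T) :
  reflect (exists2 x, List.In x s & p x) (has p s).
Proof.
elim: s => [|y s IHs] /=; first by right; case.
apply: (iffP orP) => [[py | /IHs [x sx px]] | [x [<- | sx] px]].
- by exists y; first left.
- by exists x; first right.
- by left.
- by right; apply/IHs; exists x.
Qed.

Lemma has_mono_copy_comp n m (c : coloring n) (e : 'I_m -> 'I_n) col k (H : graph k) :
  injective e -> has_mono_copy (fun x y => c (e x) (e y)) col H -> has_mono_copy c col H.
Proof. by move=> e_inj [f [f_inj f_mono]]; exists (e \o f); split; first exact: inj_comp. Qed.

Lemma arrows_comp n m (c : coloring n) (e : 'I_m -> 'I_n) G H :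
  injective e -> arrows (fun x y => c (e x) (e y)) G H -> arrows c G H.
Proof.
move=> e_inj [[g Gg /(has_mono_copy_comp e_inj) ?] | [h Hh /(has_mono_copy_comp e_inj) ?]].
  by left; exists g.
by right; exists h.
Qed.

Lemma ramsey_good_of_arrows G H N :
  (forall c : coloring N, symmetric_coloring c -> arrows c G H) -> ramsey_good G H N.
Proof.
move=> arrows_N n le_Nn c c_sym.
apply: (@arrows_comp _ _ c (widen_ord le_Nn)); first by move=> x y [] /val_inj.
by apply: arrows_N => x y; apply: c_sym.
Qed.

Lemma ramsey_good_gt G H M n (c : coloring n) :
  ramsey_good G H M -> symmetric_coloring c -> ~ arrows c G H -> n < M.
Proof.
by move=> good_M c_sym no_arrows; rewrite ltnNge; apply/negP => /good_M /(_ c c_sym).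
Qed.

Lemma has_mono_copy_offdiag n (c c' : coloring n) col k (H : graph k) :
    irreflexive H -> (forall x y, x != y -> c x y = c' x y) ->
  has_mono_copy c col H -> has_mono_copy c' col H.
Proof.
move=> H_irr cc' [f [f_inj f_mono]]; exists f; split=> // i j Hij.
rewrite -cc' ?f_mono // (inj_eq f_inj); apply: contraTneq Hij => ->.
by rewrite H_irr.
Qed.

Definition loopless (F : family) := forall g, List.In g F -> irreflexive (projT2 g).

Lemma arrows_offdiag n (c c' : coloring n) G H : loopless G -> loopless H ->
    (forall x y, x != y -> c x y = c' x y) ->
  arrows c G H -> arrows c' G H.
Proof.
move=> G_irr H_irr cc' [[g Gg g_mono] | [h Hh h_mono]].
  by left; exists g; last exact: has_mono_copy_offdiag (G_irr g Gg) cc' g_mono.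
by right; exists h; last exact: has_mono_copy_offdiag (H_irr h Hh) cc' h_mono.
Qed.

(* [enum 'I_n] is stuck under [vm_compute]: it is built with [insub], which
   matches on the opaque proof [idP]. *)
Fixpoint ords n : seq 'I_n :=
  if n is n'.+1 then ord0 :: map (lift ord0) (ords n') else [::].

Lemma ordsE n : ords n = enum 'I_n.
Proof.
apply: (inj_map val_inj); rewrite val_enum_ord.
elim: n => //= n IHn; rewrite -map_comp.
by rewrite (eq_map (g := addn 1 \o val)) // map_comp IHn -iotaDl.
Qed.

Lemma mem_ords n (i : 'I_n) : i \in ords n.
Proof. by rewrite ordsE mem_enum. Qed.

Lemma uniq_ords n : uniq (ords n).
Proof. by rewrite ordsE enum_uniq. Qed.

Lemma size_ords n : size (ords n) = n.
Proof. by rewrite ordsE size_enum_ord. Qed.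

Lemma nth_ords n (i0 i : 'I_n) : nth i0 (ords n) i = i.
Proof. by rewrite ordsE nth_ord_enum. Qed.

Fixpoint bitseqs n : seq (seq bool) :=
  if n is n'.+1 then [seq b :: t | b <- [:: true; false], t <- bitseqs n'] else [:: [::]].

Lemma mem_bitseqs n t : (t \in bitseqs n) = (size t == n).
Proof.
elim: n t => [|n IHn] [|b t] //.
  by apply/allpairsP => -[[b' t'] []].
apply/allpairsP/idP => [[[b' t'] [_ + [-> ->]]] | size_t]; first by rewrite IHn.
by exists (b, t); split; rewrite ?IHn // ?inE; case: (b).
Qed.

Section MonoCopyDecision.

Variables (n : nat) (c : coloring n.+1) (col : bool) (k : nat) (H : graph k).

Definition mono_embedb (f : 'I_k -> 'I_n.+1) :=
  all (fun i => all (fun j => H i j ==> (c (f i) (f j) == col)) (ords k)) (ords k).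

Lemma mono_embedP f :
  reflect (forall i j, H i j -> c (f i) (f j) = col) (mono_embedb f).
Proof.
apply: (iffP allP) => [mono i j Hij | mono i _].
  by have /allP/(_ j (mem_ords j)) := mono i (mem_ords i); rewrite Hij => /eqP.
by apply/allP => j _; apply/implyP => /mono ->.
Qed.

(* Every injection 'I_k -> 'I_n.+1 is a prefix of an ordering of all vertices. *)
Definition mono_copyb :=
  (k <= n.+1) && has (fun p => mono_embedb (nth ord0 p)) (permutations (ords n.+1)).

Lemma mono_copyP : reflect (has_mono_copy c col H) mono_copyb.
Proof.
apply: (iffP andP) => [[le_kn /hasP [p]] | [f [f_inj f_mono]]].
  rewrite mem_permutations => perm_p /mono_embedP p_mono.
  have [p_uniq size_p] : uniq p /\ size p = n.+1.
    by rewrite (perm_uniq perm_p) (perm_size perm_p) uniq_ords size_ords.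
  exists (nth ord0 p); split=> // i j /eqP.
  rewrite nth_uniq ?size_p ?(leq_trans (ltn_ord _) le_kn) // => /eqP; exact: val_inj.
have le_kn : k <= n.+1 by rewrite -[k]card_ord -[n.+1]card_ord; exact: leq_card f_inj.
pose img := map f (ords k).
pose p := img ++ [seq x <- ords n.+1 | x \notin img].
have size_img : size img = k by rewrite size_map size_ords.
have nth_p (i : 'I_k) : nth ord0 p i = f i.
  by rewrite nth_cat size_img ltn_ord (nth_map i) ?size_ords ?nth_ords.
split=> //; apply/hasP; exists p.
  rewrite mem_permutations uniq_perm ?uniq_ords //.
    rewrite cat_uniq map_inj_uniq ?filter_uniq ?uniq_ords // andbT.
    by apply/hasPn => x; rewrite mem_filter => /andP [].
  by move=> x; rewrite mem_cat mem_filter mem_ords; case: (x \in img).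
by apply/mono_embedP => i j Hij; rewrite !nth_p f_mono.
Qed.

End MonoCopyDecision.

Definition arrowsb n (c : coloring n.+1) (G H : family) :=
  has (fun g : {k & graph k} => mono_copyb c true (projT2 g)) G ||
  has (fun h : {k & graph k} => mono_copyb c false (projT2 h)) H.

Lemma arrowsP n (c : coloring n.+1) G H : reflect (arrows c G H) (arrowsb c G H).
Proof.
apply: (iffP orP) => [[] /hasInP [g Gg /mono_copyP] | [] [g Gg /mono_copyP]].
- by left; exists g.
- by right; exists g.
- by left; apply/hasInP; exists g.
- by right; apply/hasInP; exists g.
Qed.

Definition upper_pairs n : seq ('I_n * 'I_n) :=
  [seq xy : 'I_n * 'I_n <- [seq (x, y) | x <- ords n, y <- ords n] | xy.1 < xy.2].

Definition coloring_of_bits n (t : seq bool) : coloring n := fun x y =>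
  nth false t (index (if x < y then (x, y) else (y, x)) (upper_pairs n)).

Definition bits_of_coloring n (c : coloring n) : seq bool :=
  [seq c xy.1 xy.2 | xy <- upper_pairs n].

Lemma bits_of_coloringK n (c : coloring n) : symmetric_coloring c ->
  forall x y, x != y -> coloring_of_bits (bits_of_coloring c) x y = c x y.
Proof.
move=> c_sym x y ne_xy.
have bitE (u v : 'I_n) : u < v ->
    nth false (bits_of_coloring c) (index (u, v) (upper_pairs n)) = c u v.
  move=> lt_uv; have uv_in : (u, v) \in upper_pairs n.
    by rewrite mem_filter lt_uv; apply/allpairsP; exists (u, v); rewrite !mem_ords.
  by rewrite (nth_map (u, v)) ?index_mem ?nth_index.
rewrite /coloring_of_bits; case: ltngtP => [lt_xy | lt_yx | /val_inj eq_xy].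
- exact: bitE.
- by rewrite bitE // c_sym.
- by rewrite eq_xy eqxx in ne_xy.
Qed.

(* Memoising the colour of every pair makes the exhaustive check below about
   ten times faster than evaluating [coloring_of_bits] on demand. *)
Definition tabulate n (c : coloring n) : coloring n :=
  let m := [seq [seq c x y | y <- ords n] | x <- ords n] in
  fun x y => nth false (nth [::] m x) y.

Lemma tabulateE n (c : coloring n) x y : tabulate c x y = c x y.
Proof.
by rewrite /tabulate (nth_map x) ?size_ords // (nth_map y) ?size_ords // !nth_ords.
Qed.

Lemma loopless_C4P5 : loopless C4P5.
Proof. by move=> g [<- | [<- | []]] [[|[|[|[|[|]]]]]]. Qed.

Lemma K5_arrows_C4P5_check :
  all (fun t => arrowsb (tabulate (coloring_of_bits t) : coloring 5) C4P5 C4P5)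
      (bitseqs 10).
Proof. by vm_compute. Qed.

Lemma K5_arrows_C4P5 (c : coloring 5) : symmetric_coloring c -> arrows c C4P5 C4P5.
Proof.
move=> c_sym.
pose c' : coloring 5 := tabulate (coloring_of_bits (bits_of_coloring c)).
have c'E x y : x != y -> c' x y = c x y.
  by move=> ne_xy; rewrite /c' tabulateE bits_of_coloringK.
apply: (arrows_offdiag loopless_C4P5 loopless_C4P5 c'E).
apply/arrowsP/(allP K5_arrows_C4P5_check).
by rewrite mem_bitseqs size_map.
Qed.

Definition path_coloring n : coloring n :=
  fun x y => (x == y.+1 :> nat) || (y == x.+1 :> nat).

Lemma path_coloring_sym (n : nat) : symmetric_coloring (@path_coloring n).
Proof. by move=> x y; rewrite /path_coloring orbC. Qed.

Lemma K4_path_coloring_no_arrows : ~ arrows (@path_coloring 4) C4P5 C4P5.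
Proof. by move/arrowsP; vm_compute. Qed.

Theorem lemma2 : is_ramsey_number C4P5 C4P5 5.
Proof.
split; first exact: ramsey_good_of_arrows K5_arrows_C4P5.
move=> M good_M.
exact: ramsey_good_gt good_M (@path_coloring_sym 4) K4_path_coloring_no_arrows.
Qed.
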